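(* There exists a unique $h\in\Delta_f$ such that $Ph=\lambda h$. Moreover $h$ is strictly positive on $\Omega$.
   Context: Let $I=[0,1)$ carry a metric $d_I$, fix $\theta\in(0,1)$, and let $\Omega=I^{\mathbb Z}$ with metric $d(x,y)=\sup_{k\in\mathbb Z}\theta^{|k|}d_I(x_k,y_k)$. Let $\tau:I\to I$ have full branches, so that $b=\#\tau^{-1}(t)$ is constant; let $p_\tau$ be a fixed point of $\tau$. Assume there is $\eta\in(0,1)$ such that every inverse branch $\zeta$ of $\tau$ satisfies $d_I(\zeta(s),\zeta(t))\le\eta\,d_I(s,t)$. Let $(\bar\tau x)_i=\tau(x_i)$. Let $\pi_k:\Omega\to\Omega$ keep the coordinates $|i|\le k$ and set the others to $p_\tau$; $\Phi_k=\Phi\circ\pi_k$. Fix $\beta\in(0,1]$; $|\Phi|_\infty=\sup|\Phi|$, $|\Phi|_\beta=\sup_{k\in\mathbb N}\sup_{x\neq y}|\Phi_k(x)-\Phi_k(y)|/d(x,y)^\beta$, $\|\Phi\|=|\Phi|_\infty+|\Phi|_\beta$, $\mathcal C=\{\Phi\in C(\Omega):\|\Phi\|<\infty\}$. An inverse branch of order $k$ is a choice $\zeta=(\zeta_j)_{|j|\le k}$ of inverse branches of $\tau$, with $(\zeta_x)_j=\zeta_j(x_j)$ for $|j|\le k$, $(\zeta_x)_j=x_j$ otherwise; $b_k=b^{2k+1}$. For real $f\in\mathcal C$, $P_k\Phi(x)=b_k^{-1}\sum_{|\zeta|=k}e^{f(\pi_k\zeta_x)}\Phi(\pi_k\zeta_x)$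 and $P\Phi=\lim_kP_k\Phi$ pointwise. Fix a Borel probability measure $\nu_0$ on $\Omega$ with $P^*\nu_0=\lambda\nu_0$, where $\lambda=\int P\mathbf 1\,d\nu_0$ (such exists). Put $B(z)=\exp\!\left(|f|_\beta\frac{\eta^\beta}{1-\eta^\beta}z^\beta\right)$ for $z\ge0$ and $\Delta_f=\{\Phi\in C(\Omega):\Phi\ge0,\ \nu_0(\Phi)=1,\ \Phi(x)\le B(d(x,y))\Phi(y)\ \forall x,y\in\Omega\}$. *)

From Stdlib Require Import Reals Lra ZArith List Classical ClassicalEpsilon.
Open Scope R_scope.

Definition I : Type := { t : R | 0 <= t < 1 }.
Definition Omega : Type := Z -> I.

(** Supremum of a set of reals (meaningful when bounded and nonempty). *)
Definition Rsup (E : R -> Prop) : R :=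
  match excluded_middle_informative (bound E /\ exists x, E x) with
  | left H => proj1_sig (completeness E (proj1 H) (proj2 H))
  | right _ => 0
  end.

(** Real power with the convention 0^beta = 0 (beta > 0). *)
Definition rpow (z beta : R) : R :=
  if Req_EM_T z 0 then 0 else Rpower z beta.

Definition is_metric (dI : I -> I -> R) : Prop :=
  (forall s t, 0 <= dI s t) /\ (forall s t, dI s t = 0 <-> s = t) /\
  (forall s t, dI s t = dI t s) /\
  (forall s t u, dI s u <= dI s t + dI t u).

Definition distOm (dI : I -> I -> R) (theta : R) (x y : Omega) : R :=
  Rsup (fun r => exists k : Z, r = theta ^ (Z.abs_nat k) * dI (x k) (y k)).

(** tau has full branches: zeta 0, ..., zeta (b-1) are its inverse branches,
    enumerating (without repetition) the b preimages of every point. *)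
Definition inverse_branches (tau : I -> I) (b : nat) (zeta : nat -> I -> I) : Prop :=
  (forall j t, (j < b)%nat -> tau (zeta j t) = t) /\
  (forall t s, tau s = t -> exists j, (j < b)%nat /\ zeta j t = s) /\
  (forall j1 j2 t, (j1 < b)%nat -> (j2 < b)%nat -> zeta j1 t = zeta j2 t -> j1 = j2).

Definition pik (p : I) (k : nat) (x : Omega) : Omega :=
  fun i => if (Z.abs i <=? Z.of_nat k)%Z then x i else p.

Definition continuous_Om (d : Omega -> Omega -> R) (Phi : Omega -> R) : Prop :=
  forall x eps, 0 < eps -> exists del, 0 < del /\
    forall y, d x y < del -> Rabs (Phi y - Phi x) < eps.

Definition in_C (d : Omega -> Omega -> R) (p : I) (beta : R) (Phi : Omega -> R) : Prop :=
  continuous_Om d Phi /\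
  (exists M, forall x, Rabs (Phi x) <= M) /\
  (exists L, forall (k : nat) x y, x <> y ->
     Rabs (Phi (pik p k x) - Phi (pik p k y)) <= L * rpow (d x y) beta).

Definition holder_semi (d : Omega -> Omega -> R) (p : I) (beta : R) (Phi : Omega -> R) : R :=
  Rsup (fun r => exists (k : nat) x y, x <> y /\
     r = Rabs (Phi (pik p k x) - Phi (pik p k y)) / rpow (d x y) beta).

Fixpoint rsum (n : nat) (g : nat -> R) : R :=
  match n with O => 0 | S m => rsum m g + g m end.

Definition updZ (s : Z -> nat) (i : Z) (c : nat) : Z -> nat :=
  fun j => if Z.eq_dec j i then c else s j.

(** Sum of F over all choices of a branch index < b for every coordinate in l. *)
Fixpoint sum_choices (b : nat) (l : list Z) (F : (Z -> nat) -> R) : R :=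
  match l with
  | nil => F (fun _ => O)
  | i :: l' => rsum b (fun c => sum_choices b l' (fun s => F (updZ s i c)))
  end.

Definition coords (k : nat) : list Z :=
  map (fun n => (Z.of_nat n - Z.of_nat k)%Z) (seq 0 (2 * k + 1)).

Definition branch_apply (zeta : nat -> I -> I) (k : nat) (sigma : Z -> nat) (x : Omega) : Omega :=
  fun j => if (Z.abs j <=? Z.of_nat k)%Z then zeta (sigma j) (x j) else x j.

Definition Pk (b : nat) (zeta : nat -> I -> I) (p : I) (f : Omega -> R)
  (k : nat) (Phi : Omega -> R) (x : Omega) : R :=
  / INR (b ^ (2 * k + 1)) *
  sum_choices b (coords k) (fun sigma =>
     let y := pik p k (branch_apply zeta k sigma x) in exp (f y) * Phi y).

(** "P Phi = g": g is the pointwise limit of P_k Phi. *)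
Definition P_is (b : nat) (zeta : nat -> I -> I) (p : I) (f : Omega -> R)
  (Phi g : Omega -> R) : Prop :=
  forall x, Un_cv (fun k => Pk b zeta p f k Phi x) (g x).

Definition open_Om (d : Omega -> Omega -> R) (U : Omega -> Prop) : Prop :=
  forall x, U x -> exists r, 0 < r /\ forall y, d x y < r -> U y.

Definition sigma_algebra (S : (Omega -> Prop) -> Prop) : Prop :=
  S (fun _ => True) /\
  (forall A, S A -> S (fun x => ~ A x)) /\
  (forall A : nat -> Omega -> Prop, (forall n, S (A n)) -> S (fun x => exists n, A n x)).

Definition borel (d : Omega -> Omega -> R) (A : Omega -> Prop) : Prop :=
  forall S, sigma_algebra S -> (forall U, open_Om d U -> S U) -> S A.

Definition prob_measure (d : Omega -> Omega -> R) (mu : (Omega -> Prop) -> R) : Prop :=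
  mu (fun _ => True) = 1 /\
  (forall A, borel d A -> 0 <= mu A) /\
  (forall A : nat -> Omega -> Prop,
     (forall n, borel d (A n)) ->
     (forall n m x, n <> m -> A n x -> A m x -> False) ->
     infinite_sum (fun n => mu (A n)) (mu (fun x => exists n, A n x))).

Definition measurable (d : Omega -> Omega -> R) (g : Omega -> R) : Prop :=
  forall a, borel d (fun x => a < g x).

Definition ind (A : Omega -> Prop) (x : Omega) : R :=
  if excluded_middle_informative (A x) then 1 else 0.

Definition simple_below (d : Omega -> Omega -> R) (mu : (Omega -> Prop) -> R)
  (g : Omega -> R) (v : R) : Prop :=
  exists l : list (R * (Omega -> Prop)),
    Forall (fun pA => 0 <= fst pA /\ borel d (snd pA)) l /\
    (forall x, fold_right (fun pA acc => fst pA * ind (snd pA) x + acc) 0 l <= g x) /\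
    v = fold_right (fun pA acc => fst pA * mu (snd pA) + acc) 0 l.

Definition has_integral_nonneg (d : Omega -> Omega -> R) (mu : (Omega -> Prop) -> R)
  (g : Omega -> R) (v : R) : Prop :=
  measurable d g /\ (forall x, 0 <= g x) /\ is_lub (simple_below d mu g) v.

Definition has_integral (d : Omega -> Omega -> R) (mu : (Omega -> Prop) -> R)
  (g : Omega -> R) (v : R) : Prop :=
  measurable d g /\ exists v1 v2,
    has_integral_nonneg d mu (fun x => Rmax (g x) 0) v1 /\
    has_integral_nonneg d mu (fun x => Rmax (- g x) 0) v2 /\ v = v1 - v2.

Definition Bfun (hf eta beta z : R) : R :=
  exp (hf * (Rpower eta beta / (1 - Rpower eta beta)) * rpow z beta).

Definition Delta_f (d : Omega -> Omega -> R) (nu0 : (Omega -> Prop) -> R)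
  (hf eta beta : R) (Phi : Omega -> R) : Prop :=
  continuous_Om d Phi /\ (forall x, 0 <= Phi x) /\ has_integral d nu0 Phi 1 /\
  (forall x y, Phi x <= Bfun hf eta beta (d x y) * Phi y).

(** Write [L = P / lambda] for the normalised transfer operator, and for [a >= 0] let
    the cone [Lambda_a] consist of the nonnegative [Phi] with
    [Phi x <= exp (a d(x,y)^beta) Phi y]; [Delta_f] is [Lambda_{a*}] normalised by
    [nu0(Phi) = 1], where [a* = |f|_beta q/(1-q)] and [q = eta^beta].

    The proof is a cone-contraction (coupling) argument.
    - Since every order-[k] inverse branch contracts [d] by [eta], [L] maps
      [Lambda_a] into [Lambda_{T a}] with [T a = q (|f|_beta + a)] and preserves the
      [nu0]-integral (this is where [P^* nu0 = lambda nu0] enters).  [T] is a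
      contraction with fixed point [a*], so some iterate [L^N] maps [Lambda_A] into
      [Lambda_{A/2}], where [A = 2 a* + 2].
    - Functions of [Lambda_{A/2}] of integral [m] are bounded below by [2 c m]; removing
      the constant [c m] leaves them in [Lambda_A].  Iterating gives the coupling
      estimate [|L^{kN} Phi - L^{kN} Psi| <= C (1-c)^k] for [Phi, Psi] in [Lambda_A]
      of the same integral.
    - Hence [L^{kN} 1] converges uniformly to some [h], which lies in [Delta_f], is
      fixed by [L], and is bounded below by [1 / exp(a* diam^beta) > 0]; the coupling
      estimate applied to two fixed points gives uniqueness. *)

From Pilot Require Import Defs.
From Stdlib Require Import Reals Lra Lia ZArith List Classical ClassicalEpsilon
  FunctionalExtensionality PropExtensionality.
Open Scope R_scope.

Lemma exp_le : forall x y, x <= y -> exp x <= exp y.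
Proof.
  intros x y H; destruct (Rle_lt_or_eq_dec _ _ H) as [Hlt | ->];
    [apply Rlt_le, exp_increasing |]; lra.
Qed.

Lemma Rabs_le_inv : forall a c, Rabs a <= c -> - c <= a <= c.
Proof.
  intros a c H; pose proof (Rle_abs a); pose proof (Rle_abs (- a)); rewrite Rabs_Ropp in *; lra.
Qed.

Lemma le_eps : forall a c, (forall e, 0 < e -> a <= c + e) -> a <= c.
Proof. intros a c H; destruct (Rle_or_lt a c); auto; specialize (H ((a - c) / 2)); lra. Qed.

Lemma Rsup_spec : forall E, bound E -> (exists x, E x) -> is_lub E (Rsup E).
Proof.
  intros E Hb He; unfold Rsup.
  destruct (excluded_middle_informative (bound E /\ (exists x, E x))) as [H | H].
  - destruct (completeness E (proj1 H) (proj2 H)) as [l Hl]; auto.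
  - exfalso; auto.
Qed.

Lemma set_ext : forall (A B : Omega -> Prop), (forall x, A x <-> B x) -> A = B.
Proof.
  intros A B H; apply functional_extensionality; intro; apply propositional_extensionality; auto.
Qed.

Lemma Un_cv_const : forall c, Un_cv (fun _ => c) c.
Proof. intros c e He; exists O; intros; unfold Rdist; rewrite Rminus_diag, Rabs_R0; auto. Qed.

Lemma Un_cv_lin : forall u v lu lv a c, Un_cv u lu -> Un_cv v lv ->
  Un_cv (fun n => a * u n + c * v n) (a * lu + c * lv).
Proof. intros; apply CV_plus; apply CV_mult; auto; apply Un_cv_const. Qed.

(** A total limit operator: the limit of [u] if it converges, [0] otherwise. *)
Definition lim_or0 (u : nat -> R) : R :=
  match excluded_middle_informative (exists l, Un_cv u l) with
  | left H => proj1_sig (constructive_indefinite_description _ H)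
  | right _ => 0
  end.

Lemma lim_or0_eq : forall u l, Un_cv u l -> lim_or0 u = l.
Proof.
  intros u l H; unfold lim_or0.
  destruct (excluded_middle_informative (exists l, Un_cv u l)) as [H1 | H1].
  - destruct (constructive_indefinite_description _ H1) as [l' Hl']; eapply UL_sequence; eauto.
  - exfalso; eauto.
Qed.

Lemma zero_of_geometric_bound : forall z C r, 0 <= C -> 0 <= r < 1 ->
  (forall k, Rabs z <= C * r ^ k) -> z = 0.
Proof.
  intros z C r HC Hr H; destruct (Req_dec z 0) as [| Hz]; auto; exfalso.
  pose proof (Rabs_pos_lt z Hz) as Hzpos.
  destruct (pow_lt_1_zero r ltac:(rewrite Rabs_right; lra) (Rabs z / (C + 1)))
    as [k Hk]; [apply Rdiv_lt_0_compat; lra |].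
  specialize (Hk k (le_n k)); rewrite Rabs_right in Hk by (apply Rle_ge, pow_le; lra).
  apply (Rmult_lt_compat_l (C + 1)) in Hk; [| lra].
  replace ((C + 1) * (Rabs z / (C + 1))) with (Rabs z) in Hk by (field; lra).
  specialize (H k); pose proof (pow_le r k (proj1 Hr)); nra.
Qed.

Lemma rsum_ext : forall n u v, (forall c, (c < n)%nat -> u c = v c) -> rsum n u = rsum n v.
Proof. induction n; intros u v H; simpl; auto; rewrite (IHn u v), H; auto; intros; apply H; lia. Qed.

Lemma rsum_mono : forall n u v, (forall c, (c < n)%nat -> u c <= v c) -> rsum n u <= rsum n v.
Proof.
  induction n; intros u v H; simpl; [lra |].
  pose proof (IHn u v (fun c Hc => H c ltac:(lia))); pose proof (H n ltac:(lia)); lra.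
Qed.

Lemma rsum_lin : forall n u v a c, rsum n (fun i => a * u i + c * v i) = a * rsum n u + c * rsum n v.
Proof. induction n; intros; simpl; [ring |]; rewrite IHn; ring. Qed.

Lemma rsum_const : forall n c, rsum n (fun _ => c) = INR n * c.
Proof. induction n; intros; simpl rsum; [simpl; ring |]; rewrite IHn, S_INR; ring. Qed.

Definition branch_choice (b : nat) (s : Z -> nat) : Prop := forall j, (s j < b)%nat.

Lemma updZ_branch_choice : forall b s i c,
  branch_choice b s -> (c < b)%nat -> branch_choice b (updZ s i c).
Proof. intros b s i c H Hc j; unfold updZ; destruct (Z.eq_dec j i); auto. Qed.

Lemma sum_choices_mono : forall b l F G,
  (forall s, branch_choice b s -> F s <= G s) -> (0 < b)%nat ->
  sum_choices b l F <= sum_choices b l G.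
Proof.
  intros b l; induction l as [| i l IH]; intros F G H Hb; simpl.
  - apply H; intro; auto.
  - apply rsum_mono; intros c Hc; apply IH; auto; intros s Hs; apply H, updZ_branch_choice; auto.
Qed.

Lemma sum_choices_lin : forall b l F G a c,
  sum_choices b l (fun s => a * F s + c * G s) = a * sum_choices b l F + c * sum_choices b l G.
Proof.
  intros b l; induction l as [| i l IH]; intros; simpl; auto.
  rewrite <- rsum_lin; apply rsum_ext; intros; apply IH.
Qed.

Lemma sum_choices_const : forall b l c, sum_choices b l (fun _ => c) = INR (b ^ length l) * c.
Proof.
  intros b l; induction l as [| i l IH]; intros; simpl; [ring |].
  rewrite (rsum_ext _ _ (fun _ => INR (b ^ length l) * c)) by (intros; apply IH).
  rewrite rsum_const, mult_INR; ring.
Qed.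

Lemma coords_length : forall k, length (coords k) = (2 * k + 1)%nat.
Proof. intros; unfold coords; rewrite length_map, length_seq; auto. Qed.

(** ** Borel sets, probability measures and the integral of nonnegative functions *)

Section Integration.
Variable d : Omega -> Omega -> R.
Variable mu : (Omega -> Prop) -> R.
Hypothesis Hmu : prob_measure d mu.

Local Notation HIN := (has_integral_nonneg d mu).

Lemma borel_True : borel d (fun _ => True).
Proof. intros S HS HU; apply HS. Qed.

Lemma borel_compl : forall A, borel d A -> borel d (fun x => ~ A x).
Proof. intros A HA S HS HU; apply HS, HA; auto. Qed.

Lemma borel_False : borel d (fun _ => False).
Proof.
  replace (fun _ : Omega => False) with (fun x : Omega => ~ (fun _ => True) x);
    [apply borel_compl, borel_True | apply set_ext; intros; tauto].
Qed.

Lemma borel_cunion : forall F : nat -> Omega -> Prop,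
  (forall n, borel d (F n)) -> borel d (fun x => exists n, F n x).
Proof. intros F HF S HS HU; apply HS; intro n; apply HF; auto. Qed.

Lemma borel_and : forall A B, borel d A -> borel d B -> borel d (fun x => A x /\ B x).
Proof.
  intros A B HA HB.
  set (F := fun (n : nat) (x : Omega) => match n with O => ~ A x | _ => ~ B x end).
  replace (fun x => A x /\ B x) with (fun x => ~ (exists n, F n x)).
  - apply borel_compl, borel_cunion; intros [| n]; simpl; apply borel_compl; auto.
  - apply set_ext; intro x; split.
    + intro H; split; apply NNPP; intro H'; apply H; [exists O | exists 1%nat]; auto.
    + intros [H1 H2] [[| n] Hn]; auto.
Qed.

Lemma measurable_of_continuous : forall g, continuous_Om d g -> measurable d g.
Proof.
  intros g Hg a S HS HU; apply HU; intros x Hx.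
  destruct (Hg x (g x - a) ltac:(lra)) as [del [Hdel H]]; exists del; split; auto.
  intros y Hy; specialize (H y Hy); apply Rabs_def2 in H; lra.
Qed.

Lemma measurable_const : forall c, measurable d (fun _ => c).
Proof.
  intros c a; destruct (Rlt_dec a c).
  - replace (fun _ : Omega => a < c) with (fun _ : Omega => True);
      [apply borel_True | apply set_ext; intro; tauto].
  - replace (fun _ : Omega => a < c) with (fun _ : Omega => False);
      [apply borel_False | apply set_ext; intro; tauto].
Qed.

Lemma measurable_scale : forall g a, 0 < a -> measurable d g -> measurable d (fun x => a * g x).
Proof.
  intros g a Ha Hm c; replace (fun x => c < a * g x) with (fun x => c / a < g x); [apply Hm |].
  apply set_ext; intro x; split; intro H.
  - apply (Rmult_lt_compat_l a) in H; auto; replace (a * (c / a)) with c in H by (field; lra); auto.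
  - apply (Rmult_lt_reg_l a); auto; replace (a * (c / a)) with c by (field; lra); auto.
Qed.

Lemma measurable_shift : forall g t, measurable d g -> measurable d (fun x => g x - t).
Proof.
  intros g t Hm a; replace (fun x => a < g x - t) with (fun x => a + t < g x);
    [apply Hm | apply set_ext; intro; lra].
Qed.

Lemma mu_nonneg : forall A, borel d A -> 0 <= mu A.
Proof. apply Hmu. Qed.

Lemma mu_True : mu (fun _ => True) = 1.
Proof. apply Hmu. Qed.

Lemma mu_ext : forall A B, (forall x, A x <-> B x) -> mu A = mu B.
Proof. intros; f_equal; apply set_ext; auto. Qed.

(** Countable additivity applied to the constant family [False] forces [mu False = 0]. *)
Lemma mu_empty : mu (fun _ => False) = 0.
Proof.
  destruct Hmu as [_ [Hn Ha]].
  pose proof (Ha (fun _ _ => False) (fun _ => borel_False) ltac:(auto)) as H; cbv beta in H.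
  rewrite (mu_ext (fun x => exists n : nat, False) (fun _ => False)) in H
    by (intros; split; [intros [_ []] | tauto]).
  set (a := mu (fun _ => False)) in *; pose proof (Hn _ borel_False) as Ha0; fold a in Ha0.
  destruct (Rle_lt_or_eq_dec _ _ Ha0) as [Hpos | Hpos]; auto.
  destruct (H (a / 2) ltac:(lra)) as [N HN]; specialize (HN (S N) ltac:(lia)).
  rewrite sum_cte in HN; unfold Rdist in HN; rewrite !S_INR in HN; pose proof (pos_INR N).
  rewrite Rabs_right in HN; nra.
Qed.

Lemma mu_add : forall X Y, borel d X -> borel d Y -> (forall x, X x -> Y x -> False) ->
  mu (fun x => X x \/ Y x) = mu X + mu Y.
Proof.
  intros X Y HX HY Hd; destruct Hmu as [_ [_ Ha]].
  set (F := fun (n : nat) => match n with O => X | 1%nat => Y | _ => (fun _ : Omega => False) end).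
  assert (HF : forall n, borel d (F n)) by (intros [| [| n]]; simpl; auto using borel_False).
  assert (HD : forall n m x, n <> m -> F n x -> F m x -> False)
    by (intros [| [| n]] [| [| m]] x Hnm; simpl; intros; try tauto; eauto).
  pose proof (Ha F HF HD) as H.
  rewrite (mu_ext _ (fun x => X x \/ Y x)) in H.
  2:{ intro x; split; [intros [[| [| n]] Hn]; simpl in Hn; tauto |].
      intros [H1 | H1]; [exists O | exists 1%nat]; auto. }
  eapply uniqueness_sum; eauto; intros e He; exists 1%nat; intros n Hn.
  assert (Hs : forall k, sum_f_R0 (fun n => mu (F n)) (S k) = mu X + mu Y).
  { induction k; [simpl; ring |]; rewrite tech5, IHk; simpl; rewrite mu_empty; ring. }
  destruct n; [lia |]; rewrite Hs; unfold Rdist; rewrite Rminus_diag, Rabs_R0; auto.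
Qed.

Lemma mu_split : forall C B, borel d C -> borel d B ->
  mu C = mu (fun x => C x /\ B x) + mu (fun x => C x /\ ~ B x).
Proof.
  intros C B HC HB; rewrite <- mu_add; auto using borel_and, borel_compl; [| tauto].
  apply mu_ext; intro x; split; [| tauto]; intro; destruct (classic (B x)); tauto.
Qed.

Definition simple_eval (l : list (R * (Omega -> Prop))) (x : Omega) : R :=
  fold_right (fun pA acc => fst pA * Defs.ind (snd pA) x + acc) 0 l.

Definition simple_int_on (E : Omega -> Prop) (l : list (R * (Omega -> Prop))) : R :=
  fold_right (fun pA acc => fst pA * mu (fun x => snd pA x /\ E x) + acc) 0 l.

Local Notation simple_int := (simple_int_on (fun _ => True)).

Definition simple_wf (l : list (R * (Omega -> Prop))) : Prop :=
  Forall (fun pA => 0 <= fst pA /\ borel d (snd pA)) l.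

Lemma ind_in : forall A x, A x -> Defs.ind A x = 1.
Proof. intros; unfold Defs.ind; destruct (excluded_middle_informative (A x)); tauto. Qed.

Lemma ind_out : forall A x, ~ A x -> Defs.ind A x = 0.
Proof. intros; unfold Defs.ind; destruct (excluded_middle_informative (A x)); tauto. Qed.

Lemma simple_eval_cons : forall c A l x,
  simple_eval ((c, A) :: l) x = c * Defs.ind A x + simple_eval l x.
Proof. reflexivity. Qed.

Lemma simple_int_fold : forall l,
  fold_right (fun pA acc => fst pA * mu (snd pA) + acc) 0 l = simple_int l.
Proof. induction l as [| [c A] l IH]; simpl; auto; rewrite IH; do 2 f_equal; apply mu_ext; tauto. Qed.

Lemma simple_int_split : forall l E B, simple_wf l -> borel d E -> borel d B ->
  simple_int_on E l = simple_int_on (fun x => E x /\ B x) l + simple_int_on (fun x => E x /\ ~ B x) l.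
Proof.
  induction l as [| [c A] l IH]; intros E B Hw HE HB; simpl; [ring |].
  inversion Hw as [| ? ? [Hc HA] Hw']; subst; simpl in *.
  rewrite (IH E B Hw' HE HB), (mu_split (fun x => A x /\ E x) B) by auto using borel_and.
  rewrite (mu_ext (fun x => A x /\ E x /\ B x) (fun x => (A x /\ E x) /\ B x)) by tauto.
  rewrite (mu_ext (fun x => A x /\ E x /\ ~ B x) (fun x => (A x /\ E x) /\ ~ B x)) by tauto.
  ring.
Qed.

Lemma simple_int_le_const : forall t E K, simple_wf t -> borel d E ->
  (forall x, E x -> simple_eval t x <= K) -> simple_int_on E t <= K * mu E.
Proof.
  induction t as [| [c A] t IH]; intros E K Hw HE H; simpl in *.
  - destruct (classic (exists x, E x)) as [[x Hx] | Hn].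
    + pose proof (H x Hx); pose proof (mu_nonneg _ HE); nra.
    + rewrite (mu_ext E (fun _ => False)), mu_empty
        by (intro x; split; [intro; apply Hn; eauto | tauto]).
      lra.
  - inversion Hw as [| ? ? [Hc HA] Hw']; subst; simpl in *.
    rewrite (simple_int_split t E A Hw' HE HA), (mu_split E A HE HA).
    rewrite (mu_ext (fun x => A x /\ E x) (fun x => E x /\ A x)) by tauto.
    assert (H1 : simple_int_on (fun x => E x /\ A x) t <= (K - c) * mu (fun x => E x /\ A x)).
    { apply IH; auto using borel_and; intros x [Hx HAx]; specialize (H x Hx).
      rewrite ind_in in H; auto; lra. }
    assert (H2 : simple_int_on (fun x => E x /\ ~ A x) t <= K * mu (fun x => E x /\ ~ A x)).
    { apply IH; auto using borel_and, borel_compl; intros x [Hx HAx]; specialize (H x Hx).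
      rewrite ind_out in H; auto; lra. }
    lra.
Qed.

Lemma simple_int_le_shift_on : forall s t E K, simple_wf s -> simple_wf t -> borel d E ->
  (forall x, E x -> simple_eval t x <= simple_eval s x + K) ->
  simple_int_on E t <= simple_int_on E s + K * mu E.
Proof.
  induction s as [| [c A] s IH]; intros t E K Hs Ht HE H; simpl in *.
  - rewrite Rplus_0_l; apply simple_int_le_const; auto; intros x Hx; specialize (H x Hx);
      simpl in H; lra.
  - inversion Hs as [| ? ? [Hc HA] Hs']; subst; simpl in *.
    rewrite (simple_int_split t E A Ht HE HA), (simple_int_split s E A Hs' HE HA), (mu_split E A HE HA).
    rewrite (mu_ext (fun x => A x /\ E x) (fun x => E x /\ A x)) by tauto.
    assert (H1 : simple_int_on (fun x => E x /\ A x) t <=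
                 simple_int_on (fun x => E x /\ A x) s + (K + c) * mu (fun x => E x /\ A x)).
    { apply IH; auto using borel_and; intros x [Hx HAx]; specialize (H x Hx).
      rewrite ind_in in H; auto; lra. }
    assert (H2 : simple_int_on (fun x => E x /\ ~ A x) t <=
                 simple_int_on (fun x => E x /\ ~ A x) s + K * mu (fun x => E x /\ ~ A x)).
    { apply IH; auto using borel_and, borel_compl; intros x [Hx HAx]; specialize (H x Hx).
      rewrite ind_out in H; auto; lra. }
    lra.
Qed.

Lemma simple_int_le_shift : forall s t K, simple_wf s -> simple_wf t ->
  (forall x, simple_eval t x <= simple_eval s x + K) -> simple_int t <= simple_int s + K.
Proof.
  intros s t K Hs Ht H; rewrite <- (Rmult_1_r K), <- mu_True.
  apply simple_int_le_shift_on; auto using borel_True.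
Qed.

Definition simple_scale (c : R) (l : list (R * (Omega -> Prop))) :=
  map (fun pA => (c * fst pA, snd pA)) l.

Lemma simple_scale_spec : forall c l, 0 <= c -> simple_wf l ->
  simple_wf (simple_scale c l) /\
  (forall x, simple_eval (simple_scale c l) x = c * simple_eval l x) /\
  simple_int (simple_scale c l) = c * simple_int l.
Proof.
  intros c l Hc; induction l as [| [c' A] l IH]; intro Hw; simpl.
  - repeat split; [constructor | intro; unfold simple_eval; simpl; ring |
      unfold simple_int_on; simpl; ring].
  - inversion Hw as [| ? ? [Hc' HA] Hw']; subst; simpl in *.
    destruct (IH Hw') as [IH1 [IH2 IH3]]; repeat split.
    + constructor; auto; simpl; split; auto; apply Rmult_le_pos; auto.
    + intro x; unfold simple_eval in *; simpl; rewrite IH2; ring.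
    + unfold simple_int_on in *; simpl; rewrite IH3; ring.
Qed.

Lemma HIN_ub : forall g v s, HIN g v -> simple_wf s ->
  (forall x, simple_eval s x <= g x) -> simple_int s <= v.
Proof. intros g v s [_ [_ [Hub _]]] Hw H; apply Hub; exists s; rewrite simple_int_fold; auto. Qed.

Lemma HIN_lub : forall g v u, HIN g v ->
  (forall s, simple_wf s -> (forall x, simple_eval s x <= g x) -> simple_int s <= u) -> v <= u.
Proof.
  intros g v u [_ [_ [_ Hl]]] H; apply Hl; intros w [l [Hw [Hl' ->]]].
  rewrite simple_int_fold; apply H; auto.
Qed.

Lemma HIN_unique : forall g v v', HIN g v -> HIN g v' -> v = v'.
Proof.
  intros g v v' H1 H2; apply Rle_antisym; apply (HIN_lub g); auto; intros; eapply HIN_ub; eauto.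
Qed.

Lemma HIN_nonneg : forall g v, HIN g v -> 0 <= v.
Proof. intros g v Hg; apply (HIN_ub g v nil Hg); [constructor | intros; apply Hg]. Qed.

Lemma HIN_exists : forall g S, measurable d g -> (forall x, 0 <= g x <= S) -> exists v, HIN g v.
Proof.
  intros g S Hm Hg.
  assert (Hb : bound (simple_below d mu g)).
  { exists S; intros w [l [Hw [Hl ->]]]; rewrite simple_int_fold, <- (Rmult_1_r S), <- mu_True.
    apply simple_int_le_const; auto using borel_True.
    intros x _; eapply Rle_trans; [apply Hl | apply Hg]. }
  assert (He : exists w, simple_below d mu g w)
    by (exists 0, nil; repeat split; [constructor | intro x; apply Hg]).
  destruct (completeness _ Hb He) as [v Hv]; exists v; split; [auto | split; [intro x; apply Hg | auto]].
Qed.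

Lemma HIN_mono : forall g g' v v' a, HIN g v -> HIN g' v' -> 0 <= a ->
  (forall x, a * g x <= g' x) -> a * v <= v'.
Proof.
  intros g g' v v' a Hg Hg' Ha H.
  destruct (Rle_lt_or_eq_dec _ _ Ha) as [Hapos | <-]; [| rewrite Rmult_0_l; eapply HIN_nonneg; eauto].
  cut (v <= v' / a); [intro Hv; apply (Rmult_le_compat_l a) in Hv; [| lra];
    replace (a * (v' / a)) with v' in Hv by (field; lra); auto |].
  apply (HIN_lub g); auto; intros s Hw Hs.
  destruct (simple_scale_spec a s Ha Hw) as [Hw' [He Hi]].
  apply (Rmult_le_reg_l a); auto; replace (a * (v' / a)) with v' by (field; lra).
  rewrite <- Hi; apply (HIN_ub g'); auto; intro x; rewrite He.
  eapply Rle_trans; [apply Rmult_le_compat_l; [lra | apply Hs] | apply H].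
Qed.

Lemma HIN_ge_const : forall g v K, HIN g v -> 0 <= K -> (forall x, K <= g x) -> K <= v.
Proof.
  intros g v K Hg HK H.
  pose proof (HIN_ub g v ((K, fun _ => True) :: nil) Hg) as H1; unfold simple_int_on in H1; simpl in H1.
  rewrite (mu_ext (fun x => True /\ True) (fun _ => True)), mu_True in H1 by tauto.
  replace K with (K * 1 + 0) by ring; apply H1.
  - constructor; [simpl; split; auto using borel_True | constructor].
  - intro x; unfold simple_eval; simpl; rewrite ind_in; auto; specialize (H x); lra.
Qed.

Lemma HIN_le_const : forall g v K, HIN g v -> (forall x, g x <= K) -> v <= K.
Proof.
  intros g v K Hg H; apply (HIN_lub g); auto; intros s Hw Hs.
  rewrite <- (Rmult_1_r K), <- mu_True; apply simple_int_le_const; auto using borel_True.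
  intros x _; eapply Rle_trans; eauto.
Qed.

Lemma HIN_scale : forall g v a, HIN g v -> 0 < a -> HIN (fun x => a * g x) (a * v).
Proof.
  intros g v a Hg Ha; pose proof Hg as [Hm [Hpos _]].
  assert (Hai : 0 < / a) by (apply Rinv_0_lt_compat; auto).
  split; [apply measurable_scale; auto | split; [intro x; specialize (Hpos x); nra | split]].
  - intros w [l [Hw [Hl ->]]]; rewrite simple_int_fold.
    destruct (simple_scale_spec (/ a) l (Rlt_le _ _ Hai) Hw) as [Hw' [He Hi]].
    assert (Hle : / a * simple_int l <= v).
    { rewrite <- Hi; apply (HIN_ub g); auto; intro x; rewrite He.
      apply (Rmult_le_reg_l a); auto; rewrite <- Rmult_assoc, Rinv_r, Rmult_1_l by lra; apply Hl. }
    apply (Rmult_le_compat_l a) in Hle; [| lra]; rewrite <- Rmult_assoc, Rinv_r, Rmult_1_l in Hle; lra.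
  - intros u Hu; cut (v <= u / a).
    { intro Hv; apply (Rmult_le_compat_l a) in Hv; [| lra].
      replace (a * (u / a)) with u in Hv by (field; lra); auto. }
    apply (HIN_lub g); auto; intros s Hw Hs.
    destruct (simple_scale_spec a s (Rlt_le _ _ Ha) Hw) as [Hw' [He Hi]].
    apply (Rmult_le_reg_l a); auto; replace (a * (u / a)) with u by (field; lra).
    rewrite <- Hi; apply Hu; exists (simple_scale a s); rewrite simple_int_fold; repeat split; auto.
    intro x; change (simple_eval (simple_scale a s) x <= a * g x); rewrite He.
    apply Rmult_le_compat_l; [lra | apply Hs].
Qed.

(** The staircase [sum_{i=1}^n e 1_{G > i e}] approximates [G] from below to within [e]
    wherever [0 <= G <= n e]. *)
Fixpoint staircase (e : R) (n : nat) (G : Omega -> R) : list (R * (Omega -> Prop)) :=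
  match n with
  | O => nil
  | S n' => (e, fun x => INR (S n') * e < G x) :: staircase e n' G
  end.

Lemma staircase_wf : forall e n G, 0 <= e -> measurable d G -> simple_wf (staircase e n G).
Proof.
  induction n; intros G He Hm; [constructor |].
  constructor; [split; [auto | apply Hm] | apply IHn; auto].
Qed.

Lemma staircase_bounds : forall e G x, 0 < e -> forall n,
  simple_eval (staircase e n G) x <= INR n * e /\
  (0 <= G x -> simple_eval (staircase e n G) x <= G x) /\
  Rmin (G x - e) (INR n * e) <= simple_eval (staircase e n G) x.
Proof.
  intros e G x He n; induction n as [| n [IH1 [IH2 IH3]]].
  - unfold simple_eval; simpl; rewrite Rmult_0_l, Rmin_r; lra.
  - cbn [staircase]; rewrite simple_eval_cons; pose proof (pos_INR n) as Hn.
    rewrite S_INR in *; unfold Rmin in *; destruct (classic ((INR n + 1) * e < G x)) as [Hlt | Hlt].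
    + rewrite ind_in by exact Hlt; destruct (Rle_dec _ _), (Rle_dec _ _); lra.
    + rewrite ind_out by exact Hlt; destruct (Rle_dec _ _), (Rle_dec _ _); nra.
Qed.

Lemma simple_approx_below : forall G S e, measurable d G -> (forall x, 0 <= G x <= S) -> 0 < e ->
  exists L, simple_wf L /\ forall x, simple_eval L x <= G x <= simple_eval L x + e.
Proof.
  intros G S e Hm HG He; destruct (INR_unbounded (S / e)) as [n Hn].
  assert (HnS : S <= INR n * e).
  { apply (Rmult_lt_compat_r e) in Hn; auto; unfold Rdiv in Hn;
      rewrite Rmult_assoc, Rinv_l, Rmult_1_r in Hn; lra. }
  exists (staircase e n G); split; [apply staircase_wf; auto; lra |]; intro x.
  destruct (staircase_bounds e G x He n) as [_ [H2 H3]]; specialize (HG x).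
  split; [apply H2; lra |]; unfold Rmin in H3; destruct (Rle_dec _ _); lra.
Qed.

Lemma HIN_sub_const : forall g v t S, HIN g v -> 0 <= t -> (forall x, t <= g x <= S) ->
  HIN (fun x => g x - t) (v - t).
Proof.
  intros g v t S Hg Ht Hb; pose proof Hg as [Hm _].
  split; [apply measurable_shift; auto | split; [intro x; specialize (Hb x); lra | split]].
  - intros w [l [Hw [Hl ->]]]; rewrite simple_int_fold.
    assert (Hv : simple_int ((t, fun _ => True) :: l) = t + simple_int l).
    { unfold simple_int_on at 1; simpl; fold (simple_int l).
      rewrite (mu_ext (fun x => True /\ True) (fun _ => True)), mu_True by tauto; ring. }
    cut (simple_int ((t, fun _ => True) :: l) <= v); [lra |].
    apply (HIN_ub g); [auto | constructor; [simpl; split; auto using borel_True | auto] |].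
    intro x; rewrite simple_eval_cons, ind_in by auto; specialize (Hl x).
    change (simple_eval l x <= g x - t) in Hl; lra.
  - intros u Hu; cut (v <= u + t); [lra |].
    apply (HIN_lub g); auto; intros s Hs Hsg; apply le_eps; intros e He.
    destruct (simple_approx_below (fun x => g x - t) S e) as [L [HLw HL]];
      [apply measurable_shift; auto | intro x; specialize (Hb x); lra | auto |].
    assert (HLu : simple_int L <= u)
      by (apply Hu; exists L; rewrite simple_int_fold; repeat split; auto; intro x; apply HL).
    pose proof (simple_int_le_shift L s (t + e) HLw Hs) as H1.
    cut (simple_int s <= simple_int L + (t + e)); [lra |].
    apply H1; intro x; specialize (HL x); specialize (Hsg x); lra.
Qed.

Lemma HIN_zero : HIN (fun _ => 0) 0.
Proof.
  split; [apply measurable_const | split; [intro; lra | split]].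
  - intros w [l [Hw [Hl ->]]]; rewrite simple_int_fold, <- (Rmult_0_l (mu (fun _ => True))).
    apply simple_int_le_const; auto using borel_True; intros x _; apply Hl.
  - intros u Hu; apply Hu; exists nil; repeat split; [constructor | intro; simpl; lra].
Qed.

Lemma has_integral_iff_nonneg : forall g v, (forall x, 0 <= g x) ->
  (has_integral d mu g v <-> HIN g v).
Proof.
  intros g v Hpos; unfold has_integral.
  replace (fun x => Rmax (g x) 0) with g
    by (apply functional_extensionality; intro x; rewrite Rmax_left; auto).
  replace (fun x => Rmax (- g x) 0) with (fun _ : Omega => 0)
    by (apply functional_extensionality; intro x; rewrite Rmax_right; auto; specialize (Hpos x); lra).
  split.
  - intros [_ [v1 [v2 [H1 [H2 ->]]]]]; rewrite (HIN_unique _ _ _ H2 HIN_zero), Rminus_0_r; auto.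
  - intro Hg; split; [apply Hg |]; exists v, 0; split; [auto | split; [apply HIN_zero | ring]].
Qed.

Lemma HIN_perturb : forall g h m v delta, HIN g m -> HIN h v -> 0 <= delta ->
  (forall x, (1 - delta) * g x <= h x <= (1 + delta) * g x) -> Rabs (v - m) <= delta * m.
Proof.
  intros g h m v delta Hg Hh Hdelta H; pose proof (HIN_nonneg g m Hg); pose proof (HIN_nonneg h v Hh).
  assert (Hlow : (1 - delta) * m <= v).
  { destruct (Rle_dec (1 - delta) 0); [nra |].
    apply (HIN_mono g h); auto; [lra | intro; apply H]. }
  assert (Hup : 1 * v <= (1 + delta) * m).
  { apply (HIN_mono h (fun x => (1 + delta) * g x)); auto; [apply HIN_scale; auto; lra | lra |].
    intro; rewrite Rmult_1_l; apply H. }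
  apply Rabs_le; lra.
Qed.

End Integration.

(** ** Construction of the eigenfunction *)

Section Eigenfunction.
Variable beta : R.
Hypothesis Hbeta : 0 < beta.

Lemma rpow_nonneg : forall z, 0 <= rpow z beta.
Proof. intros; unfold rpow; destruct (Req_EM_T z 0); [lra | apply Rlt_le, exp_pos]. Qed.

Lemma rpow_pos : forall z, 0 < z -> 0 < rpow z beta.
Proof. intros; unfold rpow; destruct (Req_EM_T z 0); [lra | apply exp_pos]. Qed.

Lemma rpow_mono : forall z1 z2, 0 <= z1 <= z2 -> rpow z1 beta <= rpow z2 beta.
Proof.
  intros z1 z2 H; unfold rpow.
  destruct (Req_EM_T z1 0), (Req_EM_T z2 0); try lra.
  - apply Rlt_le, exp_pos.
  - apply Rle_Rpower_l; lra.
Qed.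

Lemma rpow_mult : forall c z, 0 < c -> 0 <= z -> rpow (c * z) beta = Rpower c beta * rpow z beta.
Proof.
  intros c z Hc Hz; unfold rpow.
  destruct (Req_EM_T z 0) as [-> | Hz0].
  - rewrite Rmult_0_r; destruct (Req_EM_T 0 0); [ring | lra].
  - destruct (Req_EM_T (c * z) 0) as [H | H]; [apply Rmult_integral in H; lra |].
    rewrite Rpower_mult_distr; lra.
Qed.

Lemma rpow_small : forall e, 0 < e -> exists del, 0 < del /\
  forall z, 0 <= z < del -> rpow z beta < e.
Proof.
  intros e He; exists (Rpower e (/ beta)); split; [apply exp_pos |].
  intros z Hz; unfold rpow; destruct (Req_EM_T z 0); auto.
  eapply Rlt_le_trans; [apply Rlt_Rpower_l with (b := Rpower e (/ beta)); lra |].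
  rewrite Rpower_mult, Rinv_l, Rpower_1; lra.
Qed.


Lemma pik_idem : forall p k x, pik p k (pik p k x) = pik p k x.
Proof. intros; apply functional_extensionality; intro i; unfold pik; destruct (_ <=? _)%Z; auto. Qed.

Variable dI : I -> I -> R.
Variable theta diam : R.
Hypothesis HdI : is_metric dI.
Hypothesis Hdiam : forall s t, dI s t <= diam.
Hypothesis Htheta : 0 < theta < 1.

Local Notation d := (distOm dI theta).

Lemma theta_pow_bounds : forall n, 0 < theta ^ n <= 1.
Proof. induction n; simpl; [lra |]; split; [apply Rmult_lt_0_compat |]; nra. Qed.

Lemma weighted_coord_bounds : forall (x y : Omega) k,
  0 <= theta ^ (Z.abs_nat k) * dI (x k) (y k) <= diam.
Proof.
  intros; pose proof (theta_pow_bounds (Z.abs_nat k)).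
  pose proof (proj1 HdI (x k) (y k)); pose proof (Hdiam (x k) (y k)); split; nra.
Qed.

Lemma distOm_lub : forall x y,
  is_lub (fun r => exists k : Z, r = theta ^ (Z.abs_nat k) * dI (x k) (y k)) (d x y).
Proof.
  intros; apply Rsup_spec.
  - exists diam; intros r [k ->]; apply weighted_coord_bounds.
  - exists (theta ^ (Z.abs_nat 0) * dI (x 0%Z) (y 0%Z)); eauto.
Qed.

Lemma distOm_ge : forall x y k, theta ^ (Z.abs_nat k) * dI (x k) (y k) <= d x y.
Proof. intros; apply (proj1 (distOm_lub x y)); eauto. Qed.

Lemma distOm_le : forall x y K,
  (forall k, theta ^ (Z.abs_nat k) * dI (x k) (y k) <= K) -> d x y <= K.
Proof. intros x y K H; apply (proj2 (distOm_lub x y)); intros r [k ->]; auto. Qed.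

Lemma distOm_bounds : forall x y, 0 <= d x y <= diam.
Proof.
  intros; split; [eapply Rle_trans; [| apply (distOm_ge x y 0%Z)] | apply distOm_le];
    intros; apply weighted_coord_bounds.
Qed.

Lemma distOm_sym : forall x y, d x y = d y x.
Proof.
  intros; apply Rle_antisym; apply distOm_le; intro k;
    rewrite (proj1 (proj2 (proj2 HdI))); apply distOm_ge.
Qed.

Lemma distOm_pos : forall x y, x <> y -> 0 < d x y.
Proof.
  intros x y Hxy; destruct (classic (exists k, x k <> y k)) as [[k Hk] | Hn].
  - eapply Rlt_le_trans; [| apply (distOm_ge x y k)].
    apply Rmult_lt_0_compat; [apply theta_pow_bounds |].
    destruct (Rle_lt_or_eq_dec _ _ (proj1 HdI (x k) (y k))) as [H | H]; auto.
    exfalso; apply Hk, (proj1 (proj2 HdI)); auto.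
  - exfalso; apply Hxy, functional_extensionality; intro k; apply NNPP; intro; apply Hn; eauto.
Qed.

Lemma weighted_coord_same : forall (p : I) k, theta ^ (Z.abs_nat k) * dI p p = 0.
Proof. intros; rewrite (proj2 (proj1 (proj2 HdI) p p) eq_refl); ring. Qed.

Lemma distOm_pik : forall p k x y, d (pik p k x) (pik p k y) <= d x y.
Proof.
  intros; apply distOm_le; intro j; unfold pik; destruct (_ <=? _)%Z; [apply distOm_ge |].
  rewrite weighted_coord_same; apply distOm_bounds.
Qed.

Lemma distOm_branch : forall (b : nat) (zeta : nat -> I -> I) (eta : R) p k s x y,
  0 <= eta ->
  (forall j u v, (j < b)%nat -> dI (zeta j u) (zeta j v) <= eta * dI u v) ->
  branch_choice b s ->
  d (pik p k (branch_apply zeta k s x)) (pik p k (branch_apply zeta k s y)) <= eta * d x y.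
Proof.
  intros b zeta eta p k s x y Heta Hcontr Hs; apply distOm_le; intro j; unfold pik, branch_apply.
  destruct (_ <=? _)%Z.
  - pose proof (Hcontr (s j) (x j) (y j) (Hs j)); pose proof (distOm_ge x y j).
    pose proof (theta_pow_bounds (Z.abs_nat j)); nra.
  - rewrite weighted_coord_same; pose proof (distOm_bounds x y); nra.
Qed.

(** [Hlam] says [lambda = nu0 (P 1)] and [Heig] says [P^* nu0 = lambda nu0] on the class
    [C]; [Mf] bounds [|f|]. *)
Variables (b : nat) (zeta : nat -> I -> I) (p_tau : I) (eta : R).
Variables (f : Omega -> R) (Mf : R) (nu0 : (Omega -> Prop) -> R) (lam : R).
Hypothesis Hb : (0 < b)%nat.
Hypothesis Heta : 0 < eta < 1.
Hypothesis Hcontr : forall j s t, (j < b)%nat -> dI (zeta j s) (zeta j t) <= eta * dI s t.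
Hypothesis Hf : in_C d p_tau beta f.
Hypothesis HMf : forall x, Rabs (f x) <= Mf.
Hypothesis Hnu0 : prob_measure d nu0.
Hypothesis Hlam : exists g, P_is b zeta p_tau f (fun _ => 1) g /\ has_integral d nu0 g lam.
Hypothesis Heig : forall Phi, in_C d p_tau beta Phi ->
  exists g, P_is b zeta p_tau f Phi g /\
    forall v, has_integral d nu0 Phi v -> has_integral d nu0 g (lam * v).

Local Notation HIN := (has_integral_nonneg d nu0).

(** [q = eta^beta] is the factor by which inverse branches contract [d^beta];
    [hf = |f|_beta]; [a_star] is the cone parameter of [Delta_f]. *)
Definition q := Rpower eta beta.
Definition hf := holder_semi d p_tau beta f.
Definition a_star := hf * (q / (1 - q)).

Definition in_cone (a : R) (Phi : Omega -> R) :=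
  (forall x, 0 <= Phi x) /\ forall x y, Phi x <= exp (a * rpow (d x y) beta) * Phi y.
Definition cone_mass (a m : R) (Phi : Omega -> R) := in_cone a Phi /\ HIN Phi m.

(** The largest ratio [Phi x / Phi y] allowed in [Lambda_a]. *)
Definition cone_ratio (a : R) := exp (a * rpow diam beta).

(** The cone parameter after one application of the transfer operator. *)
Definition cone_step (a : R) := q * (hf + a).

Definition Ptr := Pk b zeta p_tau f.

Definition Lnorm (Phi : Omega -> R) (x : Omega) := lim_or0 (fun k => Ptr k Phi x) / lam.
Definition Liter (n : nat) (Phi : Omega -> R) := Nat.iter n Lnorm Phi.

Lemma q_bounds : 0 < q < 1.
Proof.
  unfold q; split; [apply exp_pos |].
  eapply Rlt_le_trans; [apply Rlt_Rpower_l with (b := 1); lra |].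
  right; unfold Rpower; rewrite ln_1, Rmult_0_r, exp_0; auto.
Qed.

Lemma rpow_dist_bounds : forall x y, 0 <= rpow (d x y) beta <= rpow diam beta.
Proof. intros; split; [apply rpow_nonneg | apply rpow_mono, distOm_bounds]. Qed.

Lemma cone_ratio_ge1 : forall a, 0 <= a -> 1 <= cone_ratio a.
Proof.
  intros a Ha; unfold cone_ratio; rewrite <- exp_0; apply exp_le.
  pose proof (rpow_dist_bounds (fun _ => p_tau) (fun _ => p_tau)); nra.
Qed.

Lemma exp_cone_le : forall a x y, 0 <= a -> exp (a * rpow (d x y) beta) <= cone_ratio a.
Proof. intros; unfold cone_ratio; apply exp_le; pose proof (rpow_dist_bounds x y); nra. Qed.

Lemma exists_point_ne : exists i : I, i <> p_tau.
Proof.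
  assert (H0 : 0 <= 0 < 1) by lra; assert (H1 : 0 <= 1 / 2 < 1) by lra.
  set (i0 := exist (fun t => 0 <= t < 1) 0 H0); set (i1 := exist (fun t => 0 <= t < 1) (1 / 2) H1).
  assert (Hne : i0 <> i1) by (intro H; apply (f_equal (@proj1_sig _ _)) in H; simpl in H; lra).
  destruct (classic (i0 = p_tau)); [exists i1; congruence | exists i0; auto].
Qed.

Lemma exists_pair_ne : exists x y : Omega, x <> y.
Proof.
  destruct exists_point_ne as [i Hi]; exists (fun _ => i), (fun _ => p_tau).
  intro H; apply Hi, (f_equal (fun g => g 0%Z) H).
Qed.

Lemma hf_lub : is_lub (fun r => exists (k : nat) x y, x <> y /\
  r = Rabs (f (pik p_tau k x) - f (pik p_tau k y)) / rpow (d x y) beta) hf.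
Proof.
  apply Rsup_spec.
  - destruct Hf as [_ [_ [L HL]]]; exists L; intros r [k [x [y [Hxy ->]]]].
    pose proof (rpow_pos _ (distOm_pos x y Hxy)) as Hr; specialize (HL k x y Hxy).
    apply (Rmult_le_reg_r (rpow (d x y) beta)); auto; unfold Rdiv; rewrite Rmult_assoc, Rinv_l; lra.
  - destruct exists_pair_ne as [x [y Hxy]]; eexists; exists 0%nat, x, y; split; eauto.
Qed.

Lemma hf_nonneg : 0 <= hf.
Proof.
  destruct exists_pair_ne as [x [y Hxy]].
  eapply Rle_trans; [| apply (proj1 hf_lub); exists 0%nat, x, y; split; eauto].
  apply Rmult_le_pos; [apply Rabs_pos | apply Rlt_le, Rinv_0_lt_compat, rpow_pos, distOm_pos; auto].
Qed.

Lemma hf_bound : forall k X Y, pik p_tau k X = X -> pik p_tau k Y = Y ->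
  f X <= f Y + hf * rpow (d X Y) beta.
Proof.
  intros k X Y HX HY; destruct (classic (X = Y)) as [-> | Hne].
  - pose proof hf_nonneg; pose proof (rpow_nonneg (d Y Y)); nra.
  - pose proof (rpow_pos _ (distOm_pos X Y Hne)) as Hr.
    assert (H : Rabs (f (pik p_tau k X) - f (pik p_tau k Y)) / rpow (d X Y) beta <= hf)
      by (apply (proj1 hf_lub); exists k, X, Y; auto).
    rewrite HX, HY in H; apply (Rmult_le_compat_r (rpow (d X Y) beta)) in H; [| lra].
    unfold Rdiv in H; rewrite Rmult_assoc, Rinv_l, Rmult_1_r in H by lra.
    pose proof (Rle_abs (f X - f Y)); lra.
Qed.

Lemma cone_holder : forall a Phi K, 0 <= a -> in_cone a Phi -> (forall x, Phi x <= K) ->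
  forall x y, Rabs (Phi y - Phi x) <= a * cone_ratio a * K * rpow (d x y) beta.
Proof.
  intros a Phi K Ha [Hpos Hc] HK.
  assert (Hgen : forall x y, Phi y - Phi x <= a * cone_ratio a * K * rpow (d x y) beta).
  { intros x y; set (r := rpow (d x y) beta); pose proof (rpow_dist_bounds x y) as Hr; fold r in Hr.
    pose proof (Hc y x) as G1; rewrite distOm_sym in G1; fold r in G1.
    assert (G2 : exp (a * r) - 1 <= a * r * exp (a * r)).
    { pose proof (exp_ineq1_le (- (a * r))) as G; rewrite exp_Ropp in G.
      pose proof (exp_pos (a * r)); apply (Rmult_le_compat_r (exp (a * r))) in G; [| lra].
      rewrite Rinv_l in G; [nra | lra]. }
    assert (G3 : exp (a * r) <= cone_ratio a) by (apply exp_cone_le; auto).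
    pose proof (Hpos x); pose proof (HK x); pose proof (exp_pos (a * r)).
    assert (G4 : (exp (a * r) - 1) * Phi x <= a * r * cone_ratio a * K).
    { apply Rle_trans with (a * r * exp (a * r) * Phi x); [apply Rmult_le_compat_r; auto |].
      apply Rle_trans with (a * r * cone_ratio a * Phi x).
      - apply Rmult_le_compat_r; auto; apply Rmult_le_compat_l; nra.
      - apply Rmult_le_compat_l; auto; pose proof (cone_ratio_ge1 a Ha); apply Rmult_le_pos; nra. }
    nra. }
  intros x y; apply Rabs_le; split; [pose proof (Hgen y x); rewrite distOm_sym in H; lra | apply Hgen].
Qed.

Lemma cone_continuous : forall a Phi K, 0 <= a -> in_cone a Phi -> (forall x, Phi x <= K) ->
  continuous_Om d Phi.
Proof.
  intros a Phi K Ha Hc HK x e He; set (C := a * cone_ratio a * K).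
  assert (HC : 0 <= C).
  { unfold C; pose proof (cone_ratio_ge1 a Ha); pose proof (proj1 Hc x); pose proof (HK x).
    apply Rmult_le_pos; [apply Rmult_le_pos |]; lra. }
  destruct (rpow_small (e / (C + 1))) as [del [Hdel Hs]]; [apply Rdiv_lt_0_compat; lra |].
  exists del; split; auto; intros y Hy.
  pose proof (cone_holder a Phi K Ha Hc HK x y) as H; fold C in H.
  assert (Hr : rpow (d x y) beta < e / (C + 1)) by (apply Hs; split; auto; apply distOm_bounds).
  pose proof (rpow_nonneg (d x y)); apply (Rmult_lt_compat_l (C + 1)) in Hr; [| lra].
  replace ((C + 1) * (e / (C + 1))) with e in Hr by (field; lra); nra.
Qed.

(** Bounded cone functions belong to the class [C], so [Heig] applies to them. *)
Lemma cone_in_C : forall a Phi K, 0 <= a -> in_cone a Phi -> (forall x, Phi x <= K) ->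
  in_C d p_tau beta Phi.
Proof.
  intros a Phi K Ha Hc HK; split; [eapply cone_continuous; eauto | split].
  - exists K; intro x; rewrite Rabs_right; auto; apply Rle_ge, (proj1 Hc).
  - exists (a * cone_ratio a * K); intros k x y _.
    pose proof (cone_holder a Phi K Ha Hc HK (pik p_tau k y) (pik p_tau k x)) as H.
    rewrite distOm_sym in H; eapply Rle_trans; [apply H |]; apply Rmult_le_compat_l.
    + pose proof (cone_ratio_ge1 a Ha); pose proof (proj1 Hc x); pose proof (HK x).
      apply Rmult_le_pos; [apply Rmult_le_pos |]; lra.
    + apply rpow_mono; split; [apply distOm_bounds | apply distOm_pik].
Qed.

Definition branch_point (k : nat) (s : Z -> nat) (x : Omega) := pik p_tau k (branch_apply zeta k s x).

Definition average (k : nat) (F : (Z -> nat) -> R) :=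
  / INR (b ^ (2 * k + 1)) * sum_choices b (coords k) F.

Lemma Ptr_unfold : forall k Phi x,
  Ptr k Phi x = average k (fun s => exp (f (branch_point k s x)) * Phi (branch_point k s x)).
Proof. reflexivity. Qed.

Lemma nb_branches_pos : forall k, 0 < INR (b ^ (2 * k + 1)).
Proof. intro k; apply lt_0_INR; induction (2 * k + 1)%nat; simpl; lia. Qed.

Lemma average_const : forall k c, average k (fun _ => c) = c.
Proof.
  intros; unfold average; rewrite sum_choices_const, coords_length.
  pose proof (nb_branches_pos k); field; lra.
Qed.

Lemma average_mono : forall k F G, (forall s, branch_choice b s -> F s <= G s) ->
  average k F <= average k G.
Proof.
  intros; unfold average; apply Rmult_le_compat_l;
    [apply Rlt_le, Rinv_0_lt_compat, nb_branches_pos | apply sum_choices_mono; auto].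
Qed.

Lemma average_lin : forall k F G a c,
  average k (fun s => a * F s + c * G s) = a * average k F + c * average k G.
Proof. intros; unfold average; rewrite sum_choices_lin; ring. Qed.

Lemma Ptr_lin : forall k Phi Psi t x,
  Ptr k (fun y => Phi y - t * Psi y) x = Ptr k Phi x - t * Ptr k Psi x.
Proof.
  intros; rewrite !Ptr_unfold.
  pose proof (average_lin k (fun s => exp (f (branch_point k s x)) * Phi (branch_point k s x))
    (fun s => exp (f (branch_point k s x)) * Psi (branch_point k s x)) 1 (- t)) as H.
  etransitivity; [| etransitivity; [apply H | ring]].
  f_equal; apply functional_extensionality; intro; ring.
Qed.

Lemma Ptr_nonneg : forall k Phi x, (forall y, 0 <= Phi y) -> 0 <= Ptr k Phi x.
Proof.
  intros; rewrite Ptr_unfold, <- (average_const k 0); apply average_mono; intros.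
  apply Rmult_le_pos; [apply Rlt_le, exp_pos | auto].
Qed.

Lemma f_bounds : forall x, - Mf <= f x <= Mf.
Proof. intro x; apply Rabs_le_inv, HMf. Qed.

Lemma Ptr_one_lb : forall k x, exp (- Mf) <= Ptr k (fun _ => 1) x.
Proof.
  intros; rewrite Ptr_unfold, <- (average_const k (exp (- Mf))) at 1; apply average_mono; intros.
  rewrite Rmult_1_r; apply exp_le, f_bounds.
Qed.

Lemma Ptr_close : forall k Phi Psi e x, (forall y, Rabs (Phi y - Psi y) <= e) ->
  Rabs (Ptr k Phi x - Ptr k Psi x) <= exp Mf * e.
Proof.
  intros k Phi Psi e x H.
  replace (Ptr k Phi x - Ptr k Psi x) with (Ptr k (fun y => Phi y - 1 * Psi y) x)
    by (rewrite Ptr_lin; ring).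
  rewrite Ptr_unfold; apply Rabs_le.
  assert (Hterm : forall y, - (exp Mf * e) <= exp (f y) * (Phi y - 1 * Psi y) <= exp Mf * e).
  { intro y; apply Rabs_le_inv; rewrite Rabs_mult, Rmult_1_l, (Rabs_right (exp _))
      by (apply Rle_ge, Rlt_le, exp_pos).
    apply Rmult_le_compat; [apply Rlt_le, exp_pos | apply Rabs_pos | apply exp_le, f_bounds | apply H]. }
  split; [rewrite <- (average_const k (- (exp Mf * e))) | rewrite <- (average_const k (exp Mf * e))];
    apply average_mono; intros; apply Hterm.
Qed.

(** The key cone estimate: [P_k] maps [Lambda_a] into [Lambda_{q (hf + a)}], because every
    branch contracts [d^beta] by [q] and [f] is [hf]-Holder on truncated points. *)
Lemma Ptr_cone : forall a Phi k x y, 0 <= a -> in_cone a Phi ->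
  Ptr k Phi x <= exp (cone_step a * rpow (d x y) beta) * Ptr k Phi y.
Proof.
  intros a Phi k x y Ha [Hpos Hc]; rewrite !Ptr_unfold.
  set (K := exp (cone_step a * rpow (d x y) beta)).
  replace (K * _) with
    (average k (fun s => K * (exp (f (branch_point k s y)) * Phi (branch_point k s y)) + 0 * 0))
    by (rewrite average_lin; ring).
  apply average_mono; intros s Hs; rewrite Rmult_0_l, Rplus_0_r.
  set (X := branch_point k s x); set (Y := branch_point k s y); set (r := rpow (d x y) beta).
  assert (HrXY : rpow (d X Y) beta <= q * r).
  { unfold q, r; rewrite <- rpow_mult; [| lra | apply distOm_bounds].
    apply rpow_mono; split; [apply distOm_bounds | apply (distOm_branch b zeta eta); auto; lra]. }
  assert (Hf1 : f X <= f Y + hf * rpow (d X Y) beta)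
    by (apply (hf_bound k); unfold X, Y, branch_point; apply pik_idem).
  pose proof (rpow_nonneg (d X Y)); assert (Hr : 0 <= r) by apply rpow_nonneg.
  pose proof hf_nonneg; pose proof q_bounds.
  assert (Hweight : exp (f X) <= exp (f Y) * exp (hf * q * r))
    by (rewrite <- exp_plus; apply exp_le; nra).
  assert (Hcone_XY : Phi X <= exp (a * q * r) * Phi Y).
  { eapply Rle_trans; [apply Hc |]; apply Rmult_le_compat_r; [apply Hpos | apply exp_le; nra]. }
  unfold K, cone_step; fold r; replace (q * (hf + a) * r) with (hf * q * r + a * q * r) by ring.
  rewrite exp_plus; pose proof (Hpos X); pose proof (Hpos Y); pose proof (exp_pos (f X)).
  pose proof (exp_pos (f Y)); pose proof (exp_pos (hf * q * r)); pose proof (exp_pos (a * q * r)).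
  apply Rle_trans with (exp (f Y) * exp (hf * q * r) * (exp (a * q * r) * Phi Y));
    [apply Rmult_le_compat; lra | right; ring].
Qed.

Lemma Lnorm_spec : forall Phi g x, Un_cv (fun k => Ptr k Phi x) g -> Lnorm Phi x = g / lam.
Proof. intros; unfold Lnorm; rewrite (lim_or0_eq _ g); auto. Qed.

(** [lambda >= exp (- Mf) > 0], since [P 1 >= exp (- Mf)] and [nu0] has mass 1. *)
Lemma lam_pos : 0 < lam.
Proof.
  destruct Hlam as [g [Hg Hi]]; pose proof (exp_pos (- Mf)).
  assert (Hge : forall x, exp (- Mf) <= g x).
  { intro x; apply (@Rle_cv_lim (fun _ => exp (- Mf)) (fun k => Ptr k (fun _ => 1) x));
      [intro; apply Ptr_one_lb | apply Un_cv_const | apply Hg]. }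
  apply (has_integral_iff_nonneg d nu0 Hnu0) in Hi; [| intro x; specialize (Hge x); lra].
  pose proof (HIN_ge_const d nu0 Hnu0 g lam (exp (- Mf)) Hi (Rlt_le _ _ (exp_pos _)) Hge); lra.
Qed.

Lemma cone_mass_bounds : forall a m Phi, 0 <= a -> cone_mass a m Phi ->
  forall x, m / cone_ratio a <= Phi x <= cone_ratio a * m.
Proof.
  intros a m Phi Ha [[Hpos Hc] Hi] x; pose proof (cone_ratio_ge1 a Ha) as HE.
  assert (Hcmp : forall x y, Phi x <= cone_ratio a * Phi y).
  { intros y z; eapply Rle_trans; [apply Hc |].
    apply Rmult_le_compat_r; [apply Hpos | apply exp_cone_le; auto]. }
  split.
  - assert (m <= cone_ratio a * Phi x) by (apply (HIN_le_const d nu0 Hnu0 Phi); auto).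
    apply (Rmult_le_reg_l (cone_ratio a)); [lra |].
    replace (cone_ratio a * (m / cone_ratio a)) with m by (field; lra); auto.
  - assert (Phi x / cone_ratio a <= m).
    { apply (HIN_ge_const d nu0 Hnu0 Phi); auto.
      - unfold Rdiv; apply Rmult_le_pos; [apply Hpos | apply Rlt_le, Rinv_0_lt_compat; lra].
      - intro y; apply (Rmult_le_reg_l (cone_ratio a)); [lra |].
        replace (cone_ratio a * (Phi x / cone_ratio a)) with (Phi x) by (field; lra); auto. }
    apply (Rmult_le_compat_l (cone_ratio a)) in H; [| lra].
    replace (cone_ratio a * (Phi x / cone_ratio a)) with (Phi x) in H by (field; lra); auto.
Qed.

Lemma Lnorm_cone_mass : forall a m Phi, 0 <= a -> cone_mass a m Phi ->
  (forall x, Un_cv (fun k => Ptr k Phi x) (lam * Lnorm Phi x)) /\ cone_mass (cone_step a) m (Lnorm Phi).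
Proof.
  intros a m Phi Ha HG; pose proof (cone_mass_bounds a m Phi Ha HG) as Hbd; destruct HG as [Hcone Hi].
  assert (HC : in_C d p_tau beta Phi) by (apply (cone_in_C a Phi (cone_ratio a * m)); auto; apply Hbd).
  destruct (Heig Phi HC) as [g [Hg Hgi]]; pose proof lam_pos as Hl.
  assert (HL : Lnorm Phi = fun x => / lam * g x).
  { apply functional_extensionality; intro x; rewrite (Lnorm_spec _ _ _ (Hg x)); unfold Rdiv; ring. }
  rewrite HL; split; [intro x; replace (lam * (/ lam * g x)) with (g x) by (field; lra); apply Hg |].
  assert (Hgpos : forall x, 0 <= g x).
  { intro x; apply (@Rle_cv_lim (fun _ => 0) (fun k => Ptr k Phi x));
      [intro; apply Ptr_nonneg, Hcone | apply Un_cv_const | apply Hg]. }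
  assert (Hgc : forall x y, g x <= exp (cone_step a * rpow (d x y) beta) * g y).
  { intros x y; apply (@Rle_cv_lim (fun k => Ptr k Phi x)
      (fun k => exp (cone_step a * rpow (d x y) beta) * Ptr k Phi y));
      [intro; apply Ptr_cone; auto | apply Hg | apply CV_mult; [apply Un_cv_const | apply Hg]]. }
  assert (Hgi' : HIN g (lam * m)).
  { apply (has_integral_iff_nonneg d nu0 Hnu0); auto.
    apply Hgi, (has_integral_iff_nonneg d nu0 Hnu0); auto; apply Hcone. }
  assert (Hil : 0 < / lam) by (apply Rinv_0_lt_compat; auto).
  split; [split |].
  - intro x; apply Rmult_le_pos; auto; lra.
  - intros x y; specialize (Hgc x y); apply (Rmult_le_compat_l (/ lam)) in Hgc; lra.
  - pose proof (HIN_scale d nu0 g (lam * m) (/ lam) Hgi' Hil) as Hs.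
    replace (/ lam * (lam * m)) with m in Hs by (field; lra); exact Hs.
Qed.

Lemma cone_step_nonneg : forall a, 0 <= a -> 0 <= cone_step a.
Proof. intros; unfold cone_step; pose proof hf_nonneg; pose proof q_bounds; apply Rmult_le_pos; lra. Qed.

Lemma cone_step_iter : forall n a, Nat.iter n cone_step a = a_star + q ^ n * (a - a_star).
Proof.
  induction n; intros; simpl; [ring |]; rewrite IHn; unfold cone_step, a_star.
  pose proof q_bounds; field; lra.
Qed.

Lemma cone_mass_weaken : forall a a' m Phi, a <= a' -> cone_mass a m Phi -> cone_mass a' m Phi.
Proof.
  intros a a' m Phi Ha [[Hpos Hc] Hi]; split; auto; split; auto; intros x y.
  eapply Rle_trans; [apply Hc |]; apply Rmult_le_compat_r; [apply Hpos |].
  apply exp_le; pose proof (rpow_nonneg (d x y)); nra.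
Qed.

Lemma cone_mass_iter : forall a m Phi, 0 <= a -> cone_mass a m Phi -> forall n,
  cone_mass (Nat.iter n cone_step a) m (Liter n Phi) /\
  (forall x, Un_cv (fun k => Ptr k (Liter n Phi) x) (lam * Liter (S n) Phi x)).
Proof.
  intros a m Phi Ha HG n.
  assert (Hnn : forall n, 0 <= Nat.iter n cone_step a)
    by (induction n0; simpl; auto; apply cone_step_nonneg; auto).
  induction n as [| n [IH _]].
  - split; [exact HG | apply (Lnorm_cone_mass a m Phi Ha HG)].
  - destruct (Lnorm_cone_mass _ m _ (Hnn n) IH) as [_ H2].
    split; [exact H2 | apply (Lnorm_cone_mass _ m _ (Hnn (S n)) H2)].
Qed.

Definition one : Omega -> R := fun _ => 1.

Lemma cone_mass_one : cone_mass 0 1 one.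
Proof.
  split; [split; intros; unfold one; [lra | rewrite Rmult_0_l, exp_0; lra] |].
  destruct (HIN_exists d nu0 Hnu0 one 1) as [v Hv]; [apply measurable_const | intro; unfold one; lra |].
  enough (Hv1 : v = 1) by (rewrite <- Hv1; exact Hv); apply Rle_antisym.
  - apply (HIN_le_const d nu0 Hnu0 one); auto; intro; unfold one; lra.
  - apply (HIN_ge_const d nu0 Hnu0 one); auto; [lra | intro; unfold one; lra].
Qed.

(** [L] is linear on functions where [P] converges, hence so are its iterates on cones. *)
Lemma Lnorm_lin : forall Phi Psi t,
  (forall x, Un_cv (fun k => Ptr k Phi x) (lam * Lnorm Phi x)) ->
  (forall x, Un_cv (fun k => Ptr k Psi x) (lam * Lnorm Psi x)) ->
  Lnorm (fun y => Phi y - t * Psi y) = fun x => Lnorm Phi x - t * Lnorm Psi x.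
Proof.
  intros Phi Psi t H1 H2; apply functional_extensionality; intro x.
  rewrite (Lnorm_spec _ (1 * (lam * Lnorm Phi x) + (- t) * (lam * Lnorm Psi x))).
  - pose proof lam_pos; field; lra.
  - eapply Un_cv_ext; [| apply Un_cv_lin; [apply H1 | apply H2]]; intro n; simpl; rewrite Ptr_lin; ring.
Qed.

Lemma Liter_lin : forall a a' m m' Phi Psi t, 0 <= a -> 0 <= a' ->
  cone_mass a m Phi -> cone_mass a' m' Psi ->
  forall n, Liter n (fun y => Phi y - t * Psi y) = fun x => Liter n Phi x - t * Liter n Psi x.
Proof.
  intros a a' m m' Phi Psi t Ha Ha' H1 H2 n; induction n; [reflexivity |].
  change (Lnorm (Liter n (fun y => Phi y - t * Psi y)) =
          fun x => Lnorm (Liter n Phi) x - t * Lnorm (Liter n Psi) x).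
  rewrite IHn; apply Lnorm_lin;
    [apply (cone_mass_iter a m Phi Ha H1 n) | apply (cone_mass_iter a' m' Psi Ha' H2 n)].
Qed.

(** **** Coupling: [L^N] contracts the cone [Lambda_A] *)

Lemma a_star_nonneg : 0 <= a_star.
Proof.
  unfold a_star; pose proof hf_nonneg; pose proof q_bounds; apply Rmult_le_pos; auto.
  unfold Rdiv; apply Rmult_le_pos; [lra | apply Rlt_le, Rinv_0_lt_compat; lra].
Qed.

Lemma cone_mass_sub_const : forall a m Phi t, 0 <= a -> cone_mass a m Phi -> 0 <= t ->
  (forall x, 2 * t <= Phi x) -> cone_mass (2 * a) (m - t) (fun y => Phi y - t * one y).
Proof.
  intros a m Phi t Ha HG Ht Hge; pose proof (cone_mass_bounds a m Phi Ha HG) as Hbd.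
  destruct HG as [[Hpos Hc] Hi]; unfold one; split; [split |].
  - intro x; specialize (Hge x); lra.
  - intros x y; set (r := rpow (d x y) beta); assert (Hr : 0 <= r) by apply rpow_nonneg.
    specialize (Hc x y); fold r in Hc; replace (2 * a * r) with (a * r + a * r) by ring.
    rewrite exp_plus; set (u := exp (a * r)) in *.
    assert (Hu : 1 <= u) by (unfold u; rewrite <- exp_0; apply exp_le; nra).
    specialize (Hge y); pose proof (Hpos y).
    assert (K1 : 0 <= u * Phi y - t * (u + 1)) by nra.
    assert (K2 : 0 <= (u - 1) * (u * Phi y - t * (u + 1))) by (apply Rmult_le_pos; lra).
    nra.
  - replace (fun y => Phi y - t * 1) with (fun y => Phi y - t)
      by (apply functional_extensionality; intro; ring).
    apply (HIN_sub_const d nu0 Hnu0 Phi m t (cone_ratio a * m)); auto.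
    intro x; split; [specialize (Hge x); lra | apply Hbd].
Qed.

(** The large cone [Lambda_A], the fraction [c_low] of the mass that can be removed from
    functions of [Lambda_{A/2}], and the resulting contraction rate [rho]. *)
Definition A_big := 2 * a_star + 2.
Definition c_low := / (2 * cone_ratio (A_big / 2)).
Definition rho := 1 - c_low.
Definition C_coup := 2 * cone_ratio A_big.

Lemma A_big_bounds : 0 <= A_big /\ a_star <= A_big.
Proof. unfold A_big; pose proof a_star_nonneg; lra. Qed.

Lemma c_low_bounds : 0 < c_low <= 1 / 2.
Proof.
  unfold c_low; assert (0 <= A_big / 2) by (pose proof A_big_bounds; lra).
  pose proof (cone_ratio_ge1 _ H); split; [apply Rinv_0_lt_compat; lra |].
  apply (Rmult_le_reg_l (2 * cone_ratio (A_big / 2))); [lra |]; rewrite Rinv_r; lra.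
Qed.

Lemma rho_bounds : 0 <= rho < 1.
Proof. unfold rho; pose proof c_low_bounds; lra. Qed.

Lemma C_coup_pos : 0 < C_coup.
Proof. unfold C_coup; pose proof (cone_ratio_ge1 A_big (proj1 A_big_bounds)); lra. Qed.

Lemma cone_mass_recentre : forall m Phi, 0 <= m -> cone_mass (A_big / 2) m Phi ->
  cone_mass A_big (m - c_low * m) (fun y => Phi y - (c_low * m) * one y).
Proof.
  intros m Phi Hm HG; pose proof c_low_bounds; pose proof A_big_bounds as [HA _].
  replace A_big with (2 * (A_big / 2)) at 1 by field.
  apply cone_mass_sub_const; [lra | exact HG | nra | intro y].
  pose proof (cone_mass_bounds (A_big / 2) m Phi ltac:(lra) HG y) as [Hlow _].
  pose proof (cone_ratio_ge1 (A_big / 2) ltac:(lra)).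
  unfold c_low; replace (2 * (/ (2 * cone_ratio (A_big / 2)) * m)) with (m / cone_ratio (A_big / 2))
    by (field; lra); lra.
Qed.

Lemma coupling : forall N, Nat.iter N cone_step A_big <= A_big / 2 ->
  forall k Phi Psi m, 0 <= m -> cone_mass A_big m Phi -> cone_mass A_big m Psi ->
  forall x, Rabs (Liter (k * N) Phi x - Liter (k * N) Psi x) <= C_coup * m * rho ^ k.
Proof.
  intros N HN k; pose proof A_big_bounds as [HA _]; pose proof c_low_bounds.
  induction k as [| k IH]; intros Phi Psi m Hm H1 H2 x.
  - simpl; pose proof (cone_mass_bounds _ _ _ HA H1 x); pose proof (cone_mass_bounds _ _ _ HA H2 x).
    pose proof (proj1 (proj1 H1) x); pose proof (proj1 (proj1 H2) x); unfold C_coup; apply Rabs_le; nra.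
  - replace (S k * N)%nat with (k * N + N)%nat by lia; unfold Liter; rewrite !Nat.iter_add.
    fold (Liter N Phi) (Liter N Psi); fold (Liter (k * N) (Liter N Phi)) (Liter (k * N) (Liter N Psi)).
    assert (G1 : cone_mass (A_big / 2) m (Liter N Phi))
      by (eapply cone_mass_weaken; [apply HN | apply (cone_mass_iter A_big m Phi HA H1 N)]).
    assert (G2 : cone_mass (A_big / 2) m (Liter N Psi))
      by (eapply cone_mass_weaken; [apply HN | apply (cone_mass_iter A_big m Psi HA H2 N)]).
    set (t := c_low * m); assert (HA2 : 0 <= A_big / 2) by lra.
    pose proof (IH _ _ (m - t) ltac:(unfold t; nra) (cone_mass_recentre m _ Hm G1)
      (cone_mass_recentre m _ Hm G2) x) as HI; fold t in HI.
    rewrite (Liter_lin _ _ _ _ _ _ t HA2 (Rle_refl 0) G1 cone_mass_one),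
      (Liter_lin _ _ _ _ _ _ t HA2 (Rle_refl 0) G2 cone_mass_one) in HI.
    replace (m - t) with (m * rho) in HI by (unfold t, rho; ring).
    replace (C_coup * m * rho ^ S k) with (C_coup * (m * rho) * rho ^ k) by (simpl; ring).
    eapply Rle_trans; [| apply HI]; right; f_equal; ring.
Qed.

(** Since [cone_step] contracts towards [a_star < A/2], some iterate maps [A] below [A/2]. *)
Lemma exists_contracting_iterate : exists N, Nat.iter N cone_step A_big <= A_big / 2.
Proof.
  pose proof q_bounds; pose proof a_star_nonneg.
  destruct (pow_lt_1_zero q ltac:(rewrite Rabs_right; lra) (/ (a_star + 2))) as [N HN];
    [apply Rinv_0_lt_compat; lra |].
  exists N; specialize (HN N (le_n N)); rewrite Rabs_right in HN by (apply Rle_ge, pow_le; lra).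
  rewrite cone_step_iter; unfold A_big; replace (2 * a_star + 2 - a_star) with (a_star + 2) by ring.
  apply (Rmult_lt_compat_r (a_star + 2)) in HN; [| lra]; rewrite Rinv_l in HN by lra; lra.
Qed.

Lemma cone_mass_one_iter : forall n, cone_mass a_star 1 (Liter n one).
Proof.
  intro n; eapply cone_mass_weaken; [| apply (cone_mass_iter 0 1 one (Rle_refl 0) cone_mass_one n)].
  rewrite cone_step_iter; pose proof q_bounds; pose proof a_star_nonneg.
  pose proof (pow_le q n ltac:(lra)); assert (q ^ n <= 1) by (rewrite <- (pow1 n); apply pow_incr; lra).
  nra.
Qed.

Lemma Lnorm_fixed : forall h, cone_mass a_star 1 h -> P_is b zeta p_tau f h (fun x => lam * h x) ->
  forall n, Liter n h = h.
Proof.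
  intros h HG HP.
  assert (Hfix : Lnorm h = h).
  { destruct (Lnorm_cone_mass a_star 1 h a_star_nonneg HG) as [H1 _].
    apply functional_extensionality; intro x; pose proof (UL_sequence _ _ _ (H1 x) (HP x)).
    pose proof lam_pos; apply (Rmult_eq_reg_l lam); lra. }
  induction n; auto; change (Lnorm (Liter n h) = h); rewrite IHn; auto.
Qed.

Lemma Lnorm_close : forall a m m' Phi Psi e, 0 <= a -> cone_mass a m Phi -> cone_mass a m' Psi ->
  (forall y, Rabs (Phi y - Psi y) <= e) ->
  forall x, Rabs (Lnorm Phi x - Lnorm Psi x) <= exp Mf / lam * e.
Proof.
  intros a m m' Phi Psi e Ha H1 H2 He x; pose proof lam_pos.
  destruct (Lnorm_cone_mass a m Phi Ha H1) as [Hc1 _].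
  destruct (Lnorm_cone_mass a m' Psi Ha H2) as [Hc2 _].
  assert (Hlim : Un_cv (fun k => 1 * Ptr k Phi x + (-1) * Ptr k Psi x)
                       (lam * (Lnorm Phi x - Lnorm Psi x))).
  { replace (lam * (Lnorm Phi x - Lnorm Psi x))
      with (1 * (lam * Lnorm Phi x) + (-1) * (lam * Lnorm Psi x))
      by ring; apply Un_cv_lin; auto. }
  assert (Hstep : forall k, - (exp Mf * e) <= 1 * Ptr k Phi x + (-1) * Ptr k Psi x <= exp Mf * e).
  { intro k; apply Rabs_le_inv;
    replace (1 * Ptr k Phi x + (-1) * Ptr k Psi x) with (Ptr k Phi x - Ptr k Psi x)
      by ring; apply Ptr_close; auto. }
  assert (Hlam_diff : Rabs (lam * (Lnorm Phi x - Lnorm Psi x)) <= exp Mf * e).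
  { apply Rabs_le; split.
    - apply (@Rle_cv_lim (fun _ => - (exp Mf * e)) (fun k => 1 * Ptr k Phi x + (-1) * Ptr k Psi x));
        [intro k; apply Hstep | apply Un_cv_const | apply Hlim].
    - apply (@Rle_cv_lim (fun k => 1 * Ptr k Phi x + (-1) * Ptr k Psi x) (fun _ => exp Mf * e));
        [intro k; apply Hstep | apply Hlim | apply Un_cv_const]. }
  rewrite Rabs_mult, (Rabs_right lam) in Hlam_diff by lra.
  apply (Rmult_le_reg_l lam); auto.
  replace (lam * (exp Mf / lam * e)) with (exp Mf * e) by (field; lra); auto.
Qed.

Section Construction.
Variable N : nat.
Hypothesis HN : Nat.iter N cone_step A_big <= A_big / 2.

Definition approx (k : nat) := Liter (k * N) one.

(** Coupling [1] with [L^{jN} 1] gives a uniform Cauchy estimate. *)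
Lemma approx_close : forall k j x, Rabs (approx k x - approx (k + j) x) <= C_coup * rho ^ k.
Proof.
  intros k j x; unfold approx; replace ((k + j) * N)%nat with (k * N + j * N)%nat by lia.
  unfold Liter at 2; rewrite Nat.iter_add; fold (Liter (j * N) one) (Liter (k * N) (Liter (j * N) one)).
  rewrite <- (Rmult_1_r C_coup); apply (coupling N HN k); [lra | |].
  - eapply cone_mass_weaken; [| apply cone_mass_one]; apply A_big_bounds.
  - eapply cone_mass_weaken; [apply A_big_bounds | apply cone_mass_one_iter].
Qed.

Lemma approx_cauchy : forall x, Cauchy_crit (fun k => approx k x).
Proof.
  intros x e He; pose proof rho_bounds; pose proof C_coup_pos.
  destruct (pow_lt_1_zero rho ltac:(rewrite Rabs_right; lra) (e / 2 / C_coup)) as [K HK];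
    [apply Rdiv_lt_0_compat; lra |].
  specialize (HK K (le_n K)); rewrite Rabs_right in HK by (apply Rle_ge, pow_le; lra).
  apply (Rmult_lt_compat_l C_coup) in HK; auto.
  replace (C_coup * (e / 2 / C_coup)) with (e / 2) in HK by (field; lra).
  exists K; intros n m Hn Hm; unfold Rdist.
  pose proof (approx_close K (n - K) x) as H1; pose proof (approx_close K (m - K) x) as H2.
  replace (K + (n - K))%nat with n in H1 by lia; replace (K + (m - K))%nat with m in H2 by lia.
  replace (approx n x - approx m x)
    with (- (approx K x - approx n x) + (approx K x - approx m x)) by ring.
  eapply Rle_lt_trans; [apply Rabs_triang |]; rewrite Rabs_Ropp; lra.
Qed.

Definition h_lim (x : Omega) : R := proj1_sig (R_complete _ (approx_cauchy x)).

Lemma h_lim_cv : forall x, Un_cv (fun k => approx k x) (h_lim x).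
Proof. intro x; unfold h_lim; destruct (R_complete _ (approx_cauchy x)); auto. Qed.

Lemma h_lim_approx : forall k x, Rabs (approx k x - h_lim x) <= C_coup * rho ^ k.
Proof.
  intros k x; apply le_eps; intros e He.
  destruct (h_lim_cv x e He) as [J HJ]; specialize (HJ (k + J)%nat ltac:(lia)); unfold Rdist in HJ.
  pose proof (approx_close k J x).
  replace (approx k x - h_lim x)
    with ((approx k x - approx (k + J) x) + (approx (k + J) x - h_lim x)) by ring.
  eapply Rle_trans; [apply Rabs_triang |]; lra.
Qed.

Lemma h_lim_bounds : forall x, 1 / cone_ratio a_star <= h_lim x <= cone_ratio a_star * 1.
Proof.
  intro x; pose proof (fun k =>
    cone_mass_bounds a_star 1 (approx k) a_star_nonneg (cone_mass_one_iter _) x) as Hbounds.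
  split.
  - apply (@Rle_cv_lim (fun _ => 1 / cone_ratio a_star) (fun k => approx k x));
      [intro; apply Hbounds | apply Un_cv_const | apply h_lim_cv].
  - apply (@Rle_cv_lim (fun k => approx k x) (fun _ => cone_ratio a_star * 1));
      [intro; apply Hbounds | apply h_lim_cv | apply Un_cv_const].
Qed.

Lemma h_lim_cone : in_cone a_star h_lim.
Proof.
  pose proof (cone_ratio_ge1 a_star a_star_nonneg); split.
  - intro x; pose proof (h_lim_bounds x).
    assert (0 < 1 / cone_ratio a_star) by (apply Rdiv_lt_0_compat; lra); lra.
  - intros x y; apply (@Rle_cv_lim (fun k => approx k x)
      (fun k => exp (a_star * rpow (d x y) beta) * approx k y));
      [intro k; apply (proj2 (proj1 (cone_mass_one_iter _))) | apply h_lim_cv |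
       apply CV_mult; [apply Un_cv_const | apply h_lim_cv]].
Qed.

Lemma h_lim_continuous : continuous_Om d h_lim.
Proof.
  apply (cone_continuous a_star h_lim (cone_ratio a_star * 1) a_star_nonneg h_lim_cone).
  apply h_lim_bounds.
Qed.

(** [h] has integral 1: it is within relative distance [C rho^k cone_ratio a_star] of
    [approx k], whose integral is 1. *)
Lemma h_lim_integral : HIN h_lim 1.
Proof.
  destruct (HIN_exists d nu0 Hnu0 h_lim (cone_ratio a_star * 1)) as [v Hv];
    [apply measurable_of_continuous, h_lim_continuous |
     intro x; split; [apply h_lim_cone | apply h_lim_bounds] |].
  pose proof (cone_ratio_ge1 a_star a_star_nonneg) as HE; pose proof rho_bounds; pose proof C_coup_pos.
  enough (Hv1 : v - 1 = 0) by (replace 1 with v by lra; exact Hv).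
  apply (zero_of_geometric_bound _ (C_coup * cone_ratio a_star) rho); [nra | lra | intro k].
  set (delta := C_coup * rho ^ k * cone_ratio a_star).
  assert (Hdelta : 0 <= delta)
    by (unfold delta; pose proof (pow_le rho k ltac:(lra)); apply Rmult_le_pos; nra).
  replace (C_coup * cone_ratio a_star * rho ^ k) with (delta * 1) by (unfold delta; ring).
  apply (HIN_perturb d nu0 (approx k) h_lim 1 v delta); auto; [apply cone_mass_one_iter |].
  intro x; pose proof (h_lim_approx k x) as Ha; apply Rabs_le_inv in Ha.
  pose proof (cone_mass_bounds a_star 1 (approx k) a_star_nonneg (cone_mass_one_iter _) x) as [Hlow _].
  assert (C_coup * rho ^ k <= delta * approx k x).
  { apply Rle_trans with (delta * (1 / cone_ratio a_star)); [right; unfold delta; field; lra |].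
    apply Rmult_le_compat_l; auto. }
  lra.
Qed.

Lemma h_lim_cone_mass : cone_mass a_star 1 h_lim.
Proof. split; [apply h_lim_cone | apply h_lim_integral]. Qed.

(** [h] is fixed by [L]: [L h] is close to [L approx_k = L^{kN} (L 1)], which is close to
    [approx_k = L^{kN} 1] by coupling, which is close to [h]. *)
Lemma h_lim_fixed : Lnorm h_lim = h_lim.
Proof.
  apply functional_extensionality; intro x; apply Rminus_diag_uniq.
  pose proof lam_pos; pose proof rho_bounds; pose proof C_coup_pos; pose proof (exp_pos Mf).
  assert (0 < exp Mf / lam) by (apply Rdiv_lt_0_compat; lra).
  apply (zero_of_geometric_bound _ (exp Mf / lam * C_coup + C_coup + C_coup) rho); [nra | lra | intro k].
  assert (Hstep_h : Rabs (Lnorm h_lim x - Lnorm (approx k) x) <= exp Mf / lam * (C_coup * rho ^ k)).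
  { apply (Lnorm_close a_star 1 1);
      [apply a_star_nonneg | apply h_lim_cone_mass | apply cone_mass_one_iter |].
    intro y; rewrite Rabs_minus_sym; apply h_lim_approx. }
  assert (Hstep_approx : Rabs (Lnorm (approx k) x - approx k x) <= C_coup * rho ^ k).
  { change (Lnorm (approx k) x) with (Liter (S (k * N)) one x); unfold Liter; rewrite Nat.iter_succ_r.
    fold (Liter (k * N) (Lnorm one)) (Liter (k * N) one); rewrite <- (Rmult_1_r C_coup).
    apply (coupling N HN k (Liter 1 one) one 1); [lra | |].
    - eapply cone_mass_weaken; [apply A_big_bounds | apply cone_mass_one_iter].
    - eapply cone_mass_weaken; [| apply cone_mass_one]; apply A_big_bounds. }
  pose proof (h_lim_approx k x) as Happrox.
  replace (Lnorm h_lim x - h_lim x) with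
    ((Lnorm h_lim x - Lnorm (approx k) x) + (Lnorm (approx k) x - approx k x)
     + (approx k x - h_lim x)) by ring.
  eapply Rle_trans; [apply Rabs_triang |]; eapply Rle_trans; [apply Rplus_le_compat_r, Rabs_triang |].
  replace ((exp Mf / lam * C_coup + C_coup + C_coup) * rho ^ k)
    with (exp Mf / lam * (C_coup * rho ^ k) + C_coup * rho ^ k + C_coup * rho ^ k) by ring.
  lra.
Qed.

End Construction.

(** [Delta_f] is the slice of integral 1 of the cone [Lambda_{a_star}], restricted to
    continuous functions: [B(z) = exp (a_star z^beta)]. *)
Lemma Delta_f_cone_mass : forall h,
  Delta_f d nu0 hf eta beta h <-> continuous_Om d h /\ cone_mass a_star 1 h.
Proof.
  intro h; unfold Delta_f, cone_mass, in_cone; split.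
  - intros [Hc [Hpos [Hint Hcone]]].
    split; [auto | split; [split; auto | apply (has_integral_iff_nonneg d nu0 Hnu0); auto]].
  - intros [Hc [[Hpos Hcone] Hint]].
    split; [auto | split; [auto | split; [apply (has_integral_iff_nonneg d nu0 Hnu0); auto | auto]]].
Qed.

Theorem eigenfunction_exists_unique : exists h,
  Delta_f d nu0 hf eta beta h /\ P_is b zeta p_tau f h (fun x => lam * h x) /\
  (forall h', Delta_f d nu0 hf eta beta h' -> P_is b zeta p_tau f h' (fun x => lam * h' x) ->
     forall x, h' x = h x) /\
  (forall x, 0 < h x).
Proof.
  destruct exists_contracting_iterate as [N HN]; set (h := h_lim N HN).
  assert (Hmass : cone_mass a_star 1 h) by apply h_lim_cone_mass.
  assert (Heigen : P_is b zeta p_tau f h (fun x => lam * h x)).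
  { intro x; destruct (Lnorm_cone_mass a_star 1 h a_star_nonneg Hmass) as [H _].
    assert (Hfix : Lnorm h = h) by apply h_lim_fixed.
    pose proof (H x) as Hx; rewrite Hfix in Hx; exact Hx. }
  exists h; split; [apply Delta_f_cone_mass; split; [apply h_lim_continuous | exact Hmass] |].
  split; [exact Heigen | split].
  - intros h' Hh' HP' x; apply Delta_f_cone_mass in Hh' as [_ Hmass'].
    apply Rminus_diag_uniq, (zero_of_geometric_bound _ C_coup rho);
      [apply Rlt_le, C_coup_pos | apply rho_bounds | intro k].
    rewrite <- (Lnorm_fixed h' Hmass' HP' (k * N)), <- (Lnorm_fixed h Hmass Heigen (k * N)).
    rewrite <- (Rmult_1_r C_coup); apply (coupling N HN k); [lra | |];
      (eapply cone_mass_weaken; [apply A_big_bounds | assumption]).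
  - intro x; pose proof (h_lim_bounds N HN x) as [Hlow _].
    pose proof (cone_ratio_ge1 a_star a_star_nonneg).
    assert (0 < 1 / cone_ratio a_star) by (apply Rdiv_lt_0_compat; lra); unfold h; lra.
Qed.

End Eigenfunction.

Lemma inverse_branches_nonempty : forall tau b zeta (t : I),
  inverse_branches tau b zeta -> (0 < b)%nat.
Proof. intros tau b zeta t [_ [Hsurj _]]; destruct (Hsurj (tau t) t eq_refl) as [j [Hj _]]; lia. Qed.

Theorem mainTheorem5
  (dI : I -> I -> R) (theta : R) (tau : I -> I) (b : nat) (zeta : nat -> I -> I)
  (p_tau : I) (eta beta : R) (f : Omega -> R) (nu0 : (Omega -> Prop) -> R) (lam : R)
  (HdI : is_metric dI) (HdIb : exists M, forall s t, dI s t <= M)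
  (Htheta : 0 < theta < 1)
  (Htau : inverse_branches tau b zeta) (Hp : tau p_tau = p_tau)
  (Heta : 0 < eta < 1)
  (Hcontr : forall j s t, (j < b)%nat -> dI (zeta j s) (zeta j t) <= eta * dI s t)
  (Hbeta : 0 < beta <= 1)
  (Hf : in_C (distOm dI theta) p_tau beta f)
  (Hnu0 : prob_measure (distOm dI theta) nu0)
  (Hlam : exists g, P_is b zeta p_tau f (fun _ => 1) g /\
                    has_integral (distOm dI theta) nu0 g lam)
  (Heig : forall Phi, in_C (distOm dI theta) p_tau beta Phi ->
            exists g, P_is b zeta p_tau f Phi g /\
              forall v, has_integral (distOm dI theta) nu0 Phi v ->
                        has_integral (distOm dI theta) nu0 g (lam * v)) :
  exists h,
    Delta_f (distOm dI theta) nu0 (holder_semi (distOm dI theta) p_tau beta f) eta beta h /\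
    P_is b zeta p_tau f h (fun x => lam * h x) /\
    (forall h', Delta_f (distOm dI theta) nu0 (holder_semi (distOm dI theta) p_tau beta f) eta beta h' ->
                P_is b zeta p_tau f h' (fun x => lam * h' x) -> forall x, h' x = h x) /\
    (forall x, 0 < h x).
Proof.
  destruct HdIb as [diam Hdiam].
  pose proof Hf as [_ [[Mf HMf] _]].
  exact (eigenfunction_exists_unique beta (proj1 Hbeta) dI theta diam HdI Hdiam Htheta
    b zeta p_tau eta f Mf nu0 lam (inverse_branches_nonempty tau b zeta p_tau Htau)
    Heta Hcontr Hf HMf Hnu0 Hlam Heig).
Qed.
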